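(* Consider a radial three-phase distribution grid on buses $\{0,\ldots,N\}$ (feeder bus $0$, each bus $n\geq1$ with parent $\pi_n<n$, line $n$ joining $\pi_n$ and $n$), with symmetric phase impedance matrices $\mathbf{Z}_n=\mathbf{Z}_n^{\top}\in\mathbb{C}^{3\times3}$, $n=1,\ldots,N$. Let $\tilde{\mathbf{Z}}_n:=\operatorname{diag}(\boldsymbol{\alpha}^* )\mathbf{Z}_n\operatorname{diag}(\boldsymbol{\alpha})$ with $\boldsymbol{\alpha}:=[1~\alpha~\alpha^2]^{\top}$, $\alpha=e^{-j2\pi/3}$, and $\mathbf{X}:=2\mathbf{M}\,\mathrm{bdiag}(\{\mathrm{Im}[\tilde{\mathbf{Z}}_n]\})\mathbf{M}^{\top}$ with $\mathbf{M}:=\mathbf{T}(\mathbf{I}_3\otimes\mathbf{F})\mathbf{T}^{\top}$. If $\mathrm{Im}[\mathbf{Z}_n]$ is strictly diagonally dominant with positive diagonal entries for all $n$, then $\mathbf{X}\succeq\mathbf{0}$.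
   Context: The full branch-bus incidence matrix $\tilde{\mathbf{A}}=[\mathbf{a}_0~\mathbf{A}]\in\mathbb{R}^{N\times(N+1)}$ has in row $n$ entry $+1$ at column $\pi_n$, $-1$ at column $n$, zeros elsewhere; $\mathbf{A}$ is the reduced incidence matrix (column of bus $0$ removed) and $\mathbf{F}:=-\mathbf{A}^{-1}$. $\mathrm{bdiag}(\{\mathbf{Y}_n\})$ is block diagonal with blocks $\mathbf{Y}_1,\ldots,\mathbf{Y}_N$. $\mathbf{T}:=[\mathbf{I}_3\otimes\mathbf{e}_1^{\top};\ldots;\mathbf{I}_3\otimes\mathbf{e}_N^{\top}]\in\mathbb{R}^{3N\times3N}$ (blocks stacked vertically), with $\mathbf{e}_n$ the $n$-th column of $\mathbf{I}_N$. $^*$ is entrywise conjugation, $\mathrm{Im}$ entrywise imaginary part. For a non-symmetric real matrix $\mathbf{Y}$, $\mathbf{Y}\succeq\mathbf{0}$ means $\mathbf{u}^{\top}\mathbf{Y}\mathbf{u}\geq0$ for all real $\mathbf{u}$. *)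

From HB Require Import structures.
From mathcomp Require Import all_boot all_order all_algebra.
From mathcomp Require Import complex mxtens.
Set Implicit Arguments. Unset Strict Implicit. Unset Printing Implicit Defensive.
Import Order.TTheory GRing.Theory Num.Theory.
Local Open Scope ring_scope.

(* Vertical stacking of N blocks B_0,...,B_{N-1}, each of size m x n;
   row (k, r) (index k*m + r) of the result is row r of B_k. *)
Definition vstack (R : Type) (N m n : nat) (B : 'I_N -> 'M[R]_(m, n))
  : 'M[R]_(N * m, n) :=
  \matrix_(i, j) B (mxtens_unindex i).1 (mxtens_unindex i).2 j.

Definition bdiag (R : pzRingType) (N m : nat) (Y : 'I_N -> 'M[R]_m)
  : 'M[R]_(N * m) :=
  \matrix_(i, j) if (mxtens_unindex i).1 == (mxtens_unindex j).1
                 then Y (mxtens_unindex i).1 (mxtens_unindex i).2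
                        (mxtens_unindex j).2
                 else 0.

(* Line k : 'I_N is line n = k+1 of the
   paper; its parent bus is par k (a natural number <= k, i.e. pi_n < n);
   column j : 'I_N is bus j+1 (the column of bus 0 is removed). *)
Definition incidence (R : pzRingType) (N : nat) (par : 'I_N -> nat) : 'M[R]_N :=
  \matrix_(k, j) ((par k == j.+1)%:R - (j == k :> nat)%:R).

Definition Fmat (R : comUnitRingType) (N : nat) (par : 'I_N -> nat) : 'M[R]_N :=
  - invmx (incidence R par).

Definition Tmat (R : pzRingType) (N : nat) : 'M[R]_(N * (3 * 1), 3 * N) :=
  vstack (fun n : 'I_N => (1%:M : 'M[R]_3) *t (delta_mx 0 n : 'M[R]_(1, N))).

Definition Mmat (R : comUnitRingType) (N : nat) (par : 'I_N -> nat)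
  : 'M[R]_(N * (3 * 1)) :=
  Tmat R N *m ((1%:M : 'M[R]_3) *t Fmat R par) *m (Tmat R N)^T.

(* alpha = e^{-j 2 pi / 3} = -1/2 - j sqrt(3)/2 *)
Definition alpha (R : rcfType) : R[i] :=
  Complex (- (1 / 2)) (- (Num.sqrt 3 / 2)).

Definition alphavec (R : rcfType) : 'cV[R[i]]_3 :=
  \col_(p < 3) (alpha R ^+ p).

Definition Ztilde (R : rcfType) (Z : 'M[R[i]]_3) : 'M[R[i]]_3 :=
  diag_mx (map_mx (@conjc R) (alphavec R))^T *m Z *m diag_mx (alphavec R)^T.

Definition ImMx (R : rcfType) (m n : nat) (A : 'M[R[i]]_(m, n)) : 'M[R]_(m, n) :=
  map_mx (@complex.Im R) A.

Definition Xmat (R : rcfType) (N : nat) (par : 'I_N -> nat)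
  (Z : 'I_N -> 'M[R[i]]_3) : 'M[R]_(N * (3 * 1)) :=
  2%:R *: (Mmat R par *m bdiag (fun n => ImMx (Ztilde (Z n))) *m (Mmat R par)^T).

Definition strictly_diag_dominant (R : numDomainType) (m : nat) (Y : 'M[R]_m) :=
  forall i : 'I_m, \sum_(j < m | j != i) `|Y i j| < `|Y i i|.

(* Y >= 0 for a possibly non-symmetric real matrix: u^T Y u >= 0 for all real u *)
Definition psd (R : numDomainType) (m : nat) (Y : 'M[R]_m) :=
  forall u : 'cV[R]_m, 0 <= (u^T *m Y *m u) 0 0.

From HB Require Import structures.
From mathcomp Require Import all_boot all_order all_algebra.
From mathcomp Require Import complex mxtens.
From mathcomp Require Import ring lra.
Import Order.TTheory GRing.Theory Num.Theory.
Local Open Scope ring_scope.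

(* X = 2 M bdiag(Im Z~_n) M^T is a congruence transform of a block-diagonal
   matrix, so it suffices that every block Im Z~_n is positive semidefinite;
   neither the tree structure (hence the hypothesis on par) nor the value of
   alpha matters.  For real u put w := diag(alpha) u = a + j b; then
   u^T Im(Z~) u = Im(w^H Z w) = a^T Im(Z) a + b^T Im(Z) b, since for symmetric Z
   the contribution of Re Z is antisymmetric in the summation indices and
   cancels.  Finally Im Z is symmetric and diagonally dominant with positive
   diagonal, hence positive semidefinite by 2 |b x y| <= |b| (x^2 + y^2). *)

Lemma mxquadE (R : comPzRingType) (m : nat) (A : 'M[R]_m) (u : 'cV[R]_m) :
  (u^T *m A *m u) 0 0 = \sum_r \sum_s u r 0 * A r s * u s 0.
Proof.
rewrite mxE; under eq_bigr do rewrite mxE big_distrl /=.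
rewrite exchange_big /=; apply: eq_bigr => r _; apply: eq_bigr => s _.
by rewrite !mxE.
Qed.

Lemma sum_mxtens_index (R : nmodType) (N m : nat) (F : 'I_(N * m) -> R) :
  \sum_i F i = \sum_k \sum_(r < m) F (mxtens_index (k, r)).
Proof.
rewrite pair_bigA /= (reindex (@mxtens_index N m)) /=; last first.
  exists (@mxtens_unindex N m) => x _.
    exact: mxtens_indexK.
  exact: mxtens_unindexK.
by apply: eq_bigr => -[k r].
Qed.

Section PsdClosure.
Variable R : numDomainType.

Lemma psd_scale (m : nat) (c : R) (A : 'M[R]_m) : 0 <= c -> psd A -> psd (c *: A).
Proof.
by move=> c_ge0 psdA u; rewrite -scalemxAr -scalemxAl mxE mulr_ge0.
Qed.

Lemma psd_congr (n m : nat) (M : 'M[R]_(n, m)) (B : 'M[R]_m) :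
  psd B -> psd (M *m B *m M^T).
Proof.
move=> psdB u.
have -> : u^T *m (M *m B *m M^T) *m u = (M^T *m u)^T *m B *m (M^T *m u).
  by rewrite !trmx_mul !trmxK !mulmxA.
exact: psdB.
Qed.

Lemma psd_bdiag (N m : nat) (Y : 'I_N -> 'M[R]_m) :
  (forall k, psd (Y k)) -> psd (bdiag Y).
Proof.
move=> psdY w; rewrite mxquadE sum_mxtens_index; apply: sumr_ge0 => k _.
set v : 'cV[R]_m := \col_r w (mxtens_index (k, r)) 0.
suff -> : \sum_(r < m) \sum_s w (mxtens_index (k, r)) 0 *
            bdiag Y (mxtens_index (k, r)) s * w s 0 = (v^T *m Y k *m v) 0 0.
  exact: psdY.
rewrite mxquadE; apply: eq_bigr => r _.
rewrite sum_mxtens_index (bigD1 k) //= [X in _ + X]big1 ?addr0 => [|l neq_lk].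
  by apply: eq_bigr => s _; rewrite !mxE !mxtens_indexK /= eqxx.
by apply: big1 => s _;
  rewrite !mxE !mxtens_indexK /= eq_sym (negbTE neq_lk) mulr0 mul0r.
Qed.

End PsdClosure.

Lemma mul_le_abs_sqr (R : realDomainType) (b x y : R) :
  - (`|b| * (x ^+ 2 + y ^+ 2)) <= 2 * (x * b * y).
Proof.
have [b_le0|b_gt0] := ler0P b.
  have : 0 <= - b by rewrite oppr_ge0.
  by move/mulr_ge0/(_ (sqr_ge0 (x - y))); nra.
by have := mulr_ge0 (ltW b_gt0) (sqr_ge0 (x + y)); nra.
Qed.

Lemma psd_diag_dominant (R : realDomainType) (m : nat) (B : 'M[R]_m) :
  B^T = B -> (forall r, \sum_(s | s != r) `|B r s| <= B r r) -> psd B.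
Proof.
move=> symB dom u; rewrite mxquadE.
set off := fun r => \sum_(s | s != r) `|B r s|.
have swap : \sum_r \sum_(s | s != r) `|B r s| * u s 0 ^+ 2
          = \sum_r off r * u r 0 ^+ 2.
  rewrite (exchange_big_dep predT) //=; apply: eq_bigr => r _.
  rewrite mulr_suml; apply: eq_big => [s|s _]; first by rewrite eq_sym.
  by rewrite -{1}symB mxE.
have lower : \sum_r (2 * B r r * u r 0 ^+ 2 - off r * u r 0 ^+ 2
                     - \sum_(s | s != r) `|B r s| * u s 0 ^+ 2)
             <= 2 * \sum_r \sum_s u r 0 * B r s * u s 0.
  rewrite mulr_sumr; apply: ler_sum => r _.
  rewrite mulr_sumr [leRHS](bigD1 r) //= -addrA.
  apply: lerD; first by rewrite expr2; lra.
  rewrite /off mulr_suml -opprD -big_split -sumrN; apply: ler_sum => s _.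
  by rewrite /= -mulrDr; apply: mul_le_abs_sqr.
rewrite sumrB swap -sumrB in lower.
have two_gt0 : 0 < 2 :> R by rewrite ltr0n.
rewrite -(pmulr_rge0 _ two_gt0); apply: le_trans lower.
apply: sumr_ge0 => r _.
have : 0 <= B r r - off r by rewrite subr_ge0; apply: dom.
by move/mulr_ge0/(_ (sqr_ge0 (u r 0))); nra.
Qed.

Lemma sum_antisym (R : numDomainType) (m : nat) (F : 'I_m -> 'I_m -> R) :
  (forall r s, F s r = - F r s) -> \sum_r \sum_s F r s = 0.
Proof.
move=> antiF; set S := \sum_r _.
have S_opp : S = - S.
  rewrite {1}/S exchange_big /S -sumrN; apply: eq_bigr => r _.
  by rewrite -sumrN; apply: eq_bigr => s _; rewrite antiF.
have : S *+ 2 = 0 by rewrite mulr2n {1}S_opp addNr.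
by move/eqP; rewrite mulrn_eq0 /= => /eqP.
Qed.

Lemma Im_conj_mul_scale (R : rcfType) (x y : R) (w z w' : R[i]) :
  x * complex.Im (conjc w * z * w') * y =
    (complex.Re w * x * (complex.Re w' * y)
     + complex.Im w * x * (complex.Im w' * y)) * complex.Im z
  + (complex.Re w * x * (complex.Im w' * y)
     - complex.Im w * x * (complex.Re w' * y)) * complex.Re z.
Proof. by case: w => ? ?; case: z => ? ?; case: w' => ? ? /=; ring. Qed.

Lemma psd_Im_diag_scale (R : rcfType) (m : nat) (d : 'rV[R[i]]_m)
    (Z : 'M[R[i]]_m) :
  Z^T = Z -> psd (ImMx Z) ->
  psd (ImMx (diag_mx (map_mx conjc d) *m Z *m diag_mx d)).
Proof.
move=> symZ psdZ u.
have symZ_entry r s : Z s r = Z r s by rewrite -{1}symZ mxE.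
set a : 'cV[R]_m := \col_r (complex.Re (d 0 r) * u r 0).
set b : 'cV[R]_m := \col_r (complex.Im (d 0 r) * u r 0).
have cross0 :
  \sum_r \sum_s (a r 0 * b s 0 - b r 0 * a s 0) * complex.Re (Z r s) = 0.
  by apply: sum_antisym => r s; rewrite symZ_entry; ring.
suff -> : (u^T *m ImMx (diag_mx (map_mx conjc d) *m Z *m diag_mx d) *m u) 0 0
          = (a^T *m ImMx Z *m a) 0 0 + (b^T *m ImMx Z *m b) 0 0.
  exact: addr_ge0.
rewrite !mxquadE -[RHS]addr0 -[X in _ + X]cross0 -!big_split.
apply: eq_bigr => r _.
rewrite -!big_split; apply: eq_bigr => s _ /=.
rewrite /ImMx mxE mul_mx_diag mul_diag_mx !mxE Im_conj_mul_scale; ring.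
Qed.

Theorem corollary1 (R : rcfType) (N : nat) (par : 'I_N -> nat)
  (Z : 'I_N -> 'M[R[i]]_3) :
  (forall n : 'I_N, par n <= n)%N ->
  (forall n : 'I_N, (Z n)^T = Z n) ->
  (forall n : 'I_N, strictly_diag_dominant (ImMx (Z n)) /\
                    (forall p : 'I_3, 0 < ImMx (Z n) p p)) ->
  psd (Xmat par Z).
Proof.
move=> _ symZ domZ.
rewrite /Xmat; apply: psd_scale; first exact: ler0n.
apply: psd_congr; apply: psd_bdiag => n.
have [sdd diag_gt0] := domZ n.
rewrite /Ztilde map_trmx; apply: psd_Im_diag_scale => //.
apply: psd_diag_dominant => [|r]; first by rewrite map_trmx symZ.
by have := sdd r; rewrite gtr0_norm // => /ltW.
Qed.
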